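(* For every $n\ge1$: (i) $\displaystyle\sum_{[\pi]\in\mathfrak{C}_{2n}^o}x^{\operatorname{drop}_{oo}([\pi])}y^{\operatorname{drop}_{eo}([\pi])}=\sum_{[\pi']\in\mathfrak{C}_{2n-1}^o}x^{\operatorname{drop}_{oo}([\pi'])}y^{\operatorname{drop}_{eo}([\pi'])}\Big[\operatorname{drop}_{oo}([\pi'])x^{-1}y+\operatorname{drop}_{eo}([\pi'])+\big(n-\operatorname{drop}_{oo}([\pi'])-\operatorname{drop}_{eo}([\pi'])\big)y\Big];$ (ii) $\displaystyle\sum_{[\pi]\in\mathfrak{C}_{2n+1}^o}x^{\operatorname{drop}_{oo}([\pi])}y^{\operatorname{drop}_{eo}([\pi])}=\sum_{[\pi']\in\mathfrak{C}_{2n}^o}x^{\operatorname{drop}_{oo}([\pi'])}y^{\operatorname{drop}_{eo}([\pi'])}\Big[\operatorname{drop}_{oo}([\pi'])+\operatorname{drop}_{eo}([\pi'])xy^{-1}+\big(n-\operatorname{drop}_{oo}([\pi'])-\operatorname{drop}_{eo}([\pi'])\big)x\Big].$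
   Context: $x,y$ are formal variables. For $n\ge1$, a cycle on $[n]=\{1,\dots,n\}$ is an equivalence class $[\pi]$ of permutations $\pi=\pi_1\cdots\pi_n$ of $[n]$ (in one-line notation) under cyclic rotation of the entries; the set of cycles on $[n]$ is $\mathfrak{C}_n$. Each cycle is represented by the permutation $\pi$ with $\pi_1=1$, and indices are read modulo $n$. A drop of $[\pi]$ is a consecutive pair $(\pi_i,\pi_{i+1})$, $1\le i\le n$, with $\pi_i>\pi_{i+1}$. By convention, the unique cycle $[(1)]\in\mathfrak{C}_1$ has exactly one drop $(\star,1)$, where $\star$ is considered neither even nor odd. A drop $(a,b)$ is odd-odd if $a,b$ are both odd, and even-odd if $a$ is even and $b$ is odd; $\operatorname{drop}_{oo}([\pi])$ and $\operatorname{drop}_{eo}([\pi])$ are the numbers of odd-odd and even-odd drops of $[\pi]$. $\mathfrak{C}_n^o$ is the set of cycles $[\pi]\in\mathfrak{C}_n$ such that for every drop $(\pi_i,\pi_{i+1})$, the entry $\pi_{i+1}$ is odd. *)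

From HB Require Import structures.
From mathcomp Require Import all_boot all_order all_algebra all_fingroup.
Set Implicit Arguments. Unset Strict Implicit. Unset Printing Implicit Defensive.
Import Order.TTheory GRing.Theory Num.Theory.

(* A cycle [pi] on [m] = {1,..,m} is represented by the unique permutation
   pi with pi_1 = 1.  We encode pi as s : 'S_m via pi_(i+1) = (s i) + 1
   (0-based positions and values in 'I_m). *)

Definition cyc_pair m (s : 'S_m) (i : 'I_m) : nat * nat :=
  ((val (s i)).+1, (val (s (ordS i))).+1).

Definition drops m (s : 'S_m) : seq (nat * nat) :=
  [seq cyc_pair s i | i <- enum 'I_m & (cyc_pair s i).2 < (cyc_pair s i).1].

Definition drop_oo m (s : 'S_m) : nat :=
  count (fun p => odd p.1 && odd p.2) (drops s).

Definition drop_eo m (s : 'S_m) : nat :=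
  count (fun p => ~~ odd p.1 && odd p.2) (drops s).

Definition cycle_rep m (s : 'S_m) : bool :=
  [forall i : 'I_m, (val i == 0) ==> (val (s i) == 0)].

Definition in_Co m (s : 'S_m) : bool := all (fun p => odd p.2) (drops s).

Definition Csum (R : comNzRingType) m (F : nat -> nat -> R) : R :=
  \sum_(s : 'S_m | cycle_rep s && in_Co s) F (drop_oo s) (drop_eo s).

(* Write a cycle as its word pi_1 ... pi_m with pi_1 = 1.  Every cycle on [m+1]
   arises exactly once by inserting m+1 into one of the m cyclic gaps (a, b) of a
   cycle on [m].  The insertion replaces the pair (a, b) by (a, m+1), never a drop,
   and (m+1, b), always a drop; so the new cycle is in C^o iff the old one is and b
   is odd, and its monomial x^oo y^eo is the old one divided by x, y or 1 (as (a, b)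
   is an odd-odd drop, an even-odd drop or no drop) and multiplied by x or y (as m+1
   is odd or even).  Every odd value is the right end of exactly one gap, so summing
   over the uphalf m admissible gaps gives, for all m >= 1 and c the factor above,
     sum_(C_(m+1)^o) x^oo y^eo
       = sum_(C_m^o) x^oo y^eo c (uphalf m + oo (x^-1 - 1) + eo (y^-1 - 1)),
   of which (i) and (ii) are the cases m = 2n-1 and m = 2n. *)

From HB Require Import structures.
From mathcomp Require Import all_boot all_order all_algebra all_fingroup.
From mathcomp Require Import zify ring.
Import GRing.Theory.
Set Implicit Arguments. Unset Strict Implicit. Unset Printing Implicit Defensive.

Section CyclicPairs.
Variable T : eqType.
Implicit Types (l r : seq T) (e : T).

Definition cpairs l : seq (T * T) := zip l (rot 1 l).

Definition insert_after l k e := take k.+1 l ++ e :: drop k.+1 l.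

Lemma size_cpairs l : size (cpairs l) = size l.
Proof. by rewrite size1_zip // size_rot. Qed.

Lemma cpairs_rot n l : perm_eq (cpairs (rot n l)) (cpairs l).
Proof.
have take_zip s t m : take m (zip s t) = zip (take m s) (take m t).
  by elim: s t m => [|a s IH] [|b t] [|m] //=; rewrite IH.
have drop_zip s t m : drop m (zip s t) = zip (drop m s) (drop m t).
  by elim: s t m => [|a s IH] [|b t] [|m] //=; case: (drop _ _).
rewrite /cpairs rot_rot {1 2}/rot zip_cat ?size_drop ?size_rot //.
by rewrite -take_zip -drop_zip perm_rot.
Qed.

Lemma count_snd_cpairs (P : pred T) l :
  count (fun p => P p.2) (cpairs l) = count P l.
Proof.
rewrite -(count_map snd) -/(unzip2 _) unzip2_zip ?size_rot //.
by apply/seq.permP; rewrite perm_rot.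
Qed.

Lemma mem_cpairs l p : p \in cpairs l -> (p.1 \in l) && (p.2 \in l).
Proof.
move=> p_l; move: (map_f fst p_l) (map_f snd p_l).
by rewrite -/(unzip1 _) -/(unzip2 _) unzip1_zip ?unzip2_zip ?size_rot // mem_rot => -> ->.
Qed.

Lemma nth_cpairs x0 l k : k < size l ->
  nth (x0, x0) (cpairs l) k = (last x0 (rot k.+1 l), head x0 (rot k.+1 l)).
Proof.
move=> lt_k; rewrite nth_zip ?size_rot //; congr pair.
  by rewrite /rot last_cat (take_nth x0 lt_k) last_rcons.
case: l lt_k => [|a l] //= lt_k; rewrite rot1_cons nth_rcons /rot /=.
case: ltnP => [lt_kl | ge_kl]; first by rewrite (drop_nth x0 lt_kl).
have -> : k = size l by lia.
by rewrite eqxx drop_size.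
Qed.

Lemma perm_cpairs_cons e b r :
  perm_eq ((last b r, b) :: cpairs (e :: b :: r))
          ((last b r, e) :: (e, b) :: cpairs (b :: r)).
Proof.
rewrite /cpairs !rot1_cons /= (lastI b r) !zip_rcons ?size_belast // -!cats1.
by apply/seq.permP => P; rewrite /= !count_cat /=; lia.
Qed.

Lemma rot_insert_after l k e : k < size l ->
  rot k.+1 (insert_after l k e) = e :: rot k.+1 l.
Proof.
move=> lt_k; have size_take_l : size (take k.+1 l) = k.+1 by rewrite size_takel.
by rewrite /insert_after -{1}size_take_l rot_size_cat /rot.
Qed.

Lemma perm_cpairs_insert_after x0 l k e : k < size l ->
  let p := nth (x0, x0) (cpairs l) k in
  perm_eq (p :: cpairs (insert_after l k e)) ((p.1, e) :: (e, p.2) :: cpairs l).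
Proof.
move=> lt_k; rewrite nth_cpairs //=; apply/seq.permP => P.
rewrite /= -(seq.permP (cpairs_rot k.+1 (insert_after l k e))).
rewrite -(seq.permP (cpairs_rot k.+1 l)) rot_insert_after //.
case: (rot k.+1 l) (size_rot k.+1 l) => [|b r] /=.
  by move=> size_l; rewrite -size_l in lt_k.
by move=> _; have /seq.permP/(_ P) := perm_cpairs_cons e b r.
Qed.

Lemma perm_insert_after l k e : perm_eq (insert_after l k e) (e :: l).
Proof. by rewrite /insert_after -cat1s perm_catCA cat1s cat_take_drop. Qed.

Lemma head_insert_after x0 l k e : l != [::] ->
  head x0 (insert_after l k e) = head x0 l.
Proof. by case: l. Qed.

Lemma index_insert_after l k e : k < size l -> e \notin take k.+1 l ->
  index e (insert_after l k e) = k.+1.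
Proof.
move=> lt_k e_take; rewrite /insert_after index_cat (negPf e_take) /= eqxx addn0.
by rewrite size_takel.
Qed.

Lemma rem_insert_after l k e : e \notin take k.+1 l ->
  rem e (insert_after l k e) = l.
Proof.
have rem_cat s1 s2 : e \notin s1 -> rem e (s1 ++ e :: s2) = s1 ++ s2.
  elim: s1 => [|a s1 IH] /=; first by rewrite eqxx.
  by rewrite inE negb_or eq_sym => /andP [/negPf -> /IH ->].
by move=> e_take; rewrite rem_cat // cat_take_drop.
Qed.

Lemma insert_after_rem l e : e \in l -> 0 < index e l ->
  insert_after (rem e l) (index e l).-1 e = l.
Proof.
move=> e_l; rewrite remE; case def_i: (index e l) => [|k] // _.
have lt_k : k.+1 < size l by rewrite -def_i index_mem.
have nth_k : nth e l k.+1 = e by rewrite -def_i nth_index.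
have size_take_l : size (take k.+1 l) = k.+1 by rewrite size_takel // ltnW.
rewrite /insert_after /= take_cat drop_cat size_take_l ltnn subnn take0 drop0 cats0.
by rewrite -[RHS](cat_take_drop k.+1 l) (drop_nth e lt_k) nth_k.
Qed.

End CyclicPairs.

Lemma cpairs_map (S T : eqType) (f : S -> T) (l : seq S) :
  cpairs (map f l) = [seq (f p.1, f p.2) | p <- cpairs l].
Proof.
by rewrite /cpairs -map_rot; elim: l (rot 1 l) => [|a l IH] [|b t] //=; rewrite IH.
Qed.

Lemma cpairs_enum_ord m : cpairs (enum 'I_m) = [seq (i, ordS i) | i <- enum 'I_m].
Proof.
rewrite /cpairs -[in LHS](map_id (enum 'I_m)) -zip_map; congr zip; rewrite map_id.
case: m => [|m]; first by rewrite enum_ord0.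
rewrite {1}enum_ordSl enum_ordSr rot1_cons map_rcons -map_comp.
congr rcons; last by apply: val_inj; rewrite /= modnn.
by apply: eq_map => i; apply: val_inj; rewrite /= modn_small // ltnS.
Qed.

Definition is_drop (p : nat * nat) := p.2 < p.1.
Definition oo_drop (p : nat * nat) := [&& is_drop p, odd p.1 & odd p.2].
Definition eo_drop (p : nat * nat) := [&& is_drop p, ~~ odd p.1 & odd p.2].

Definition drops_end_odd (l : seq nat) := all (fun p => is_drop p ==> odd p.2) (cpairs l).

Lemma drops_end_odd_insert l k e a b : k < size l ->
  nth (0, 0) (cpairs l) k = (a, b) -> a < e -> b < e ->
  drops_end_odd (insert_after l k e) = odd b && drops_end_odd l.
Proof.
move=> lt_k nth_k lt_a lt_b.
move: (perm_cpairs_insert_after 0 e lt_k); rewrite /= nth_k => perm_ins.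
have := perm_all (fun p => is_drop p ==> odd p.2) perm_ins.
rewrite /= /is_drop /= lt_b (leq_gtF (ltnW lt_a)) /=.
case odd_b: (odd b); first by rewrite implybT.
move=> _; apply/negbTE/negP => /allP all_ins.
have : (e, b) \in cpairs (insert_after l k e).
  move: (perm_mem perm_ins (e, b)); rewrite !inE eqxx orbT.
  by case: eqP => [[e_a] | _ /= ->//]; rewrite e_a ltnn in lt_a.
by move/all_ins; rewrite /is_drop /= lt_b odd_b.
Qed.

Definition cycle_words m := [seq l <- permutations (iota 1 m) | head 0 l == 1].

Lemma mem_cycle_words m l :
  (l \in cycle_words m) = perm_eq l (iota 1 m) && (head 0 l == 1).
Proof. by rewrite mem_filter mem_permutations andbC. Qed.

Lemma uniq_cycle_words m : uniq (cycle_words m).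
Proof. by rewrite filter_uniq // permutations_uniq. Qed.

Lemma size_cycle_words m l : l \in cycle_words m -> size l = m.
Proof. by rewrite mem_cycle_words => /andP [/perm_size -> _]; rewrite size_iota. Qed.

Lemma cycle_words_leq m l z : l \in cycle_words m -> z \in l -> z <= m.
Proof. by rewrite mem_cycle_words => /andP [/perm_mem -> _]; rewrite mem_iota; lia. Qed.

Lemma count_odd_iota m : count odd (iota 1 m) = uphalf m.
Proof.
elim: m => // m IH; rewrite -[m.+1]addn1 iotaD count_cat IH /= add0n addn0 addn1.
by rewrite uphalf_half /=; case: (odd m); rewrite /= ?addn0 ?add0n ?addn1.
Qed.

Lemma count_odd_cycle_words m l : l \in cycle_words m -> count odd l = uphalf m.
Proof.
by rewrite mem_cycle_words => /andP [perm_l _]; rewrite (seq.permP perm_l) count_odd_iota.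
Qed.

Lemma perm_iota_last m : perm_eq (iota 1 m.+1) (m.+1 :: iota 1 m).
Proof. by rewrite -[m.+1]addn1 iotaD perm_catC /= add1n addn1. Qed.

Lemma insert_after_cycle_words m l k : l \in cycle_words m -> k < m ->
  insert_after l k m.+1 \in cycle_words m.+1.
Proof.
move=> l_cw lt_k; have size_l := size_cycle_words l_cw.
move: l_cw; rewrite !mem_cycle_words => /andP [perm_l head_l].
rewrite head_insert_after -?size_eq0 ?size_l -?lt0n ?(leq_ltn_trans _ lt_k) // head_l andbT.
by rewrite (permPl (perm_insert_after _ _ _)) (permPr (perm_iota_last m)) perm_cons.
Qed.

Lemma rem_cycle_words m l : 0 < m -> l \in cycle_words m.+1 ->
  rem m.+1 l \in cycle_words m.
Proof.
move=> m_gt0; rewrite !mem_cycle_words => /andP [perm_l head_l].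
have l_m : m.+1 \in l by rewrite (perm_mem perm_l) mem_iota; lia.
apply/andP; split.
  have := perm_trans perm_l (perm_iota_last m).
  by rewrite (permPl (perm_to_rem l_m)) perm_cons.
have one_neq : (1 == m.+1) = false by case: m m_gt0 {perm_l l_m}.
by case: l head_l {perm_l l_m} => [|a t] //= /eqP ->; rewrite one_neq.
Qed.

Lemma insert_after_cycle_wordsK m l k : l \in cycle_words m -> k < m ->
  rem m.+1 (insert_after l k m.+1) = l /\ index m.+1 (insert_after l k m.+1) = k.+1.
Proof.
move=> l_cw lt_k; have notin_take : m.+1 \notin take k.+1 l.
  by apply/negP => /mem_take /(cycle_words_leq l_cw); rewrite ltnn.
by rewrite rem_insert_after // index_insert_after // (size_cycle_words l_cw).
Qed.

Lemma perm_cycle_words_succ m : 0 < m ->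
  perm_eq (cycle_words m.+1)
          [seq insert_after l k m.+1 | l <- cycle_words m, k <- iota 0 m].
Proof.
move=> m_gt0; apply: uniq_perm; first exact: uniq_cycle_words.
  apply: allpairs_uniq; [exact: uniq_cycle_words | exact: iota_uniq | ].
  move=> p1 p2 /allpairsP [[l1 k1] [/= l1_cw k1_m ->]].
  move=> /allpairsP [[l2 k2] [/= l2_cw k2_m ->]] /= eq_ins.
  move: k1_m k2_m; rewrite !mem_iota !add0n => /andP [_ k1_m] /andP [_ k2_m].
  have [rem1 index1] := insert_after_cycle_wordsK l1_cw k1_m.
  have [rem2 index2] := insert_after_cycle_wordsK l2_cw k2_m.
  congr pair; first by rewrite -rem1 eq_ins rem2.
  by apply/succn_inj; rewrite -index1 eq_ins index2.
move=> l'; apply/idP/allpairsP => [l'_cw | [[l k] [/= l_cw k_m ->]]]; last first.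
  by apply: insert_after_cycle_words; rewrite // mem_iota in k_m.
have l'_m : m.+1 \in l'.
  by move: l'_cw; rewrite mem_cycle_words => /andP [/perm_mem ->]; rewrite mem_iota; lia.
have index_gt0 : 0 < index m.+1 l'.
  move: l'_cw; rewrite mem_cycle_words => /andP [_].
  by case: l' {l'_m} => [|a t] //= /eqP ->; case: ifP => // /eqP; lia.
exists (rem m.+1 l', (index m.+1 l').-1); split=> /=.
- exact: rem_cycle_words.
- have := index_mem m.+1 l'; rewrite l'_m (size_cycle_words l'_cw) mem_iota; lia.
- by rewrite insert_after_rem.
Qed.

Definition cycle_word m (s : 'S_m) : seq nat := [seq (s i).+1 | i <- enum 'I_m].

Lemma drops_cycle_word m (s : 'S_m) : drops s = filter is_drop (cpairs (cycle_word s)).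
Proof.
by rewrite /drops /cycle_word cpairs_map cpairs_enum_ord -map_comp [RHS]filter_map.
Qed.

Lemma drop_oo_cycle_word m (s : 'S_m) : drop_oo s = count oo_drop (cpairs (cycle_word s)).
Proof.
by rewrite /drop_oo drops_cycle_word count_filter; apply: eq_count => p; rewrite /= andbC.
Qed.

Lemma drop_eo_cycle_word m (s : 'S_m) : drop_eo s = count eo_drop (cpairs (cycle_word s)).
Proof.
by rewrite /drop_eo drops_cycle_word count_filter; apply: eq_count => p; rewrite /= andbC.
Qed.

Lemma in_Co_cycle_word m (s : 'S_m) : in_Co s = drops_end_odd (cycle_word s).
Proof. by rewrite /in_Co drops_cycle_word all_filter. Qed.

Lemma head_cycle_word m (s : 'S_m) : 0 < m -> (head 0 (cycle_word s) == 1) = cycle_rep s.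
Proof.
case: m s => [|m] s // _; rewrite /cycle_word enum_ordSl /= eqSS.
apply/eqP/forallP => [s0 i | /(_ ord0) /eqP //].
apply/implyP => /eqP i0; have -> : i = ord0 by apply: val_inj.
by apply/eqP.
Qed.

Lemma cycle_word_inj m : injective (@cycle_word m).
Proof.
move=> s1 s2 /eq_in_map eq_s; apply/permP => i.
by apply/val_inj/succn_inj; rewrite eq_s ?mem_enum.
Qed.

Lemma perm_cycle_word m (s : 'S_m) : perm_eq (cycle_word s) (iota 1 m).
Proof.
rewrite -[1]/(1 + 0) iotaDl -val_enum_ord -map_comp.
have -> : cycle_word s = [seq (addn 1 \o val) i | i <- map s (enum 'I_m)].
  by rewrite -map_comp.
apply: perm_map; apply: uniq_perm; [|exact: enum_uniq|].
  by rewrite map_inj_uniq ?enum_uniq //; exact: perm_inj.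
by move=> i; rewrite mem_enum; apply/mapP; exists (s^-1 i)%g; rewrite ?mem_enum ?permKV.
Qed.

Lemma perm_cycle_words_enum m : 0 < m ->
  perm_eq (cycle_words m) [seq cycle_word s | s <- enum 'S_m & cycle_rep s].
Proof.
move=> m_gt0; have uniq_words : uniq (map (@cycle_word m) (enum 'S_m)).
  by rewrite map_inj_uniq ?enum_uniq //; exact: cycle_word_inj.
have sub_perms : {subset map (@cycle_word m) (enum 'S_m) <= permutations (iota 1 m)}.
  by move=> _ /mapP [s _ ->]; rewrite mem_permutations perm_cycle_word.
have size_words : size (permutations (iota 1 m)) <= size (map (@cycle_word m) (enum 'S_m)).
  by rewrite size_permutations ?iota_uniq // size_iota size_map -cardE card_Sn.
have [_ eq_words] := uniq_min_size uniq_words sub_perms size_words.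
have perm_words : perm_eq (permutations (iota 1 m)) (map (@cycle_word m) (enum 'S_m)).
  by apply: uniq_perm; rewrite ?permutations_uniq // => l; rewrite eq_words.
have head_rep : preim (@cycle_word m) (fun l => head 0 l == 1) =1 @cycle_rep m.
  by move=> s; exact: head_cycle_word.
by apply: perm_trans (perm_filter _ perm_words) _; rewrite filter_map (eq_filter head_rep).
Qed.

Lemma Csum_cycle_words (R : comNzRingType) m (F : nat -> nat -> R) : 0 < m ->
  Csum m F = (\sum_(l <- cycle_words m | drops_end_odd l)
                 F (count oo_drop (cpairs l)) (count eo_drop (cpairs l)))%R.
Proof.
move=> m_gt0; rewrite (perm_big _ (perm_cycle_words_enum m_gt0)) big_map big_filter_cond.
rewrite /Csum big_enum_cond /=; apply: eq_big => s.
  by rewrite in_Co_cycle_word.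
by rewrite drop_oo_cycle_word drop_eo_cycle_word.
Qed.

Section DropWeights.
Variables (R : fieldType) (x y : R).
Local Open Scope ring_scope.

Definition drop_weight (p : nat * nat) : R := x ^+ oo_drop p * y ^+ eo_drop p.

Definition word_weight l := \prod_(p <- cpairs l) drop_weight p.

Definition Co_weight l := if drops_end_odd l then word_weight l else 0.

Lemma word_weightE l :
  word_weight l = x ^+ count oo_drop (cpairs l) * y ^+ count eo_drop (cpairs l).
Proof.
rewrite /word_weight; elim: (cpairs l) => [|p s IH]; first by rewrite big_nil mulr1.
by rewrite big_cons IH /= !exprD /drop_weight; ring.
Qed.

Lemma sum_inv_drop_weight (s : seq (nat * nat)) :
  \sum_(p <- s | odd p.2) (drop_weight p)^-1 =
  (count (fun p => odd p.2) s)%:R + (count oo_drop s)%:R * (x^-1 - 1)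
    + (count eo_drop s)%:R * (y^-1 - 1).
Proof.
elim: s => [|[a b] s IH]; first by rewrite big_nil !mul0r !addr0.
rewrite big_cons IH /drop_weight /oo_drop /eo_drop /=.
case: (is_drop _); case: (odd a); case: (odd b);
  by rewrite /= ?natrD ?expr0 ?expr1 ?mulr1 ?mul1r ?invr1; ring.
Qed.

Lemma word_weight_insert l k e a b : (k < size l)%N ->
  nth (0, 0) (cpairs l) k = (a, b) -> (a < e)%N ->
  drop_weight (a, b) * word_weight (insert_after l k e) =
  drop_weight (e, b) * word_weight l.
Proof.
move=> lt_k nth_k lt_a.
move: (perm_cpairs_insert_after 0 e lt_k); rewrite /= nth_k => perm_ins.
have := perm_big (op := *%R) (x := 1) (P := xpredT) (F := drop_weight) _ perm_ins.
rewrite !big_cons -!/(word_weight _) => ->.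
have -> : drop_weight (a, e) = 1.
  by rewrite /drop_weight /oo_drop /eo_drop /is_drop /= (leq_gtF (ltnW lt_a)) mulr1.
exact: mul1r.
Qed.

Hypotheses (x_neq0 : x != 0) (y_neq0 : y != 0).

Lemma Co_weight_insert l k e : (k < size l)%N -> {in l, forall z, z < e}%N ->
  let p := nth (0, 0) (cpairs l) k in
  Co_weight (insert_after l k e) =
  if odd p.2 then Co_weight l * (if odd e then x else y) / drop_weight p else 0.
Proof.
move=> lt_k lt_e /=; case def_p: (nth _ _ k) => [a b] /=.
have /andP [/lt_e lt_a /lt_e lt_b] : (a \in l) && (b \in l).
  by apply: (mem_cpairs (p := (a, b))); rewrite -def_p mem_nth ?size_cpairs.
rewrite /Co_weight (drops_end_odd_insert lt_k def_p lt_a lt_b).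
case: (drops_end_odd l); case odd_b: (odd b); rewrite /= ?mul0r //.
have dw_neq0 : drop_weight (a, b) != 0 by rewrite mulf_neq0 ?expf_neq0.
rewrite -[LHS](mulKf dw_neq0) (word_weight_insert lt_k def_p lt_a).
have -> : drop_weight (e, b) = if odd e then x else y.
  rewrite /drop_weight /oo_drop /eo_drop /is_drop /= lt_b odd_b andbT.
  by case: (odd e); rewrite /= ?expr0 ?expr1 ?mulr1 ?mul1r.
by ring.
Qed.

Lemma sum_Co_weight_insert l e : {in l, forall z, z < e}%N ->
  \sum_(k <- iota 0 (size l)) Co_weight (insert_after l k e) =
  Co_weight l * (if odd e then x else y)
    * \sum_(p <- cpairs l | odd p.2) (drop_weight p)^-1.
Proof.
move=> lt_e; rewrite -[cpairs l in RHS](mkseq_nth (0, 0)) size_cpairs.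
rewrite big_map mulr_sumr [RHS]big_mkcond; apply: eq_big_seq => k.
by rewrite mem_iota => /andP [_ lt_k]; exact: Co_weight_insert.
Qed.

Lemma sum_Co_weight_succ m : (0 < m)%N ->
  \sum_(l <- cycle_words m.+1) Co_weight l =
  \sum_(l <- cycle_words m) Co_weight l * (if odd m.+1 then x else y)
    * \sum_(p <- cpairs l | odd p.2) (drop_weight p)^-1.
Proof.
move=> m_gt0; rewrite (perm_big _ (perm_cycle_words_succ m_gt0)) big_allpairs_dep.
apply: eq_big_seq => l l_cw; rewrite -[X in iota _ X](size_cycle_words l_cw).
rewrite sum_Co_weight_insert //.
by move=> z /(cycle_words_leq l_cw).
Qed.

Lemma Csum_succ m : (0 < m)%N ->
  Csum m.+1 (fun a b => x ^+ a * y ^+ b) =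
  Csum m (fun a b => x ^+ a * y ^+ b * (if odd m.+1 then x else y)
                     * ((uphalf m)%:R + a%:R * (x^-1 - 1) + b%:R * (y^-1 - 1))).
Proof.
move=> m_gt0; rewrite !Csum_cycle_words //.
under eq_bigr do rewrite -word_weightE.
rewrite [LHS]big_mkcond -/(\sum_(l <- _) Co_weight l) sum_Co_weight_succ // [RHS]big_mkcond.
apply: eq_big_seq => l l_cw; rewrite /Co_weight.
case: (drops_end_odd l); last by rewrite !mul0r.
by rewrite sum_inv_drop_weight word_weightE count_snd_cpairs (count_odd_cycle_words l_cw).
Qed.

End DropWeights.

Local Open Scope ring_scope.
Unset Implicit Arguments.

Theorem lemma2p1 (R : fieldType) (x y : R) (n : nat) :
  x != 0 -> y != 0 -> (1 <= n)%N ->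
  Csum (2 * n) (fun a b => x ^+ a * y ^+ b) =
    Csum (2 * n - 1) (fun a b => x ^+ a * y ^+ b *
      (a%:R * x^-1 * y + b%:R + ((n%:Z - a%:Z - b%:Z)%:~R) * y))
  /\
  Csum (2 * n + 1) (fun a b => x ^+ a * y ^+ b) =
    Csum (2 * n) (fun a b => x ^+ a * y ^+ b *
      (a%:R + b%:R * x * y^-1 + ((n%:Z - a%:Z - b%:Z)%:~R) * x)).
Proof.
move=> x_neq0 y_neq0 n_gt0.
split.
- have double_n : (2 * n = (2 * n - 1).+1)%N by lia.
  have uphalf_n : uphalf (2 * n - 1) = n by rewrite uphalfE -double_n mul2n doubleK.
  have odd_succ : odd (2 * n - 1).+1 = false by rewrite -double_n oddM.
  rewrite [in LHS]double_n (Csum_succ x_neq0 y_neq0); last by lia.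
  rewrite odd_succ uphalf_n.
  by rewrite /Csum; apply: eq_bigr => s _; rewrite !intrB; field; apply/andP.
- have uphalf_n : uphalf (2 * n) = n by rewrite mul2n uphalf_double.
  have odd_succ : odd (2 * n).+1 by rewrite /= oddM.
  rewrite addn1 (Csum_succ x_neq0 y_neq0) ?muln_gt0 // odd_succ uphalf_n.
  by rewrite /Csum; apply: eq_bigr => s _; rewrite !intrB; field; apply/andP.
Qed.
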